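(* Let $n\geqslant 2$ and let $\alpha$ be a partial cofinite isometry of $\mathbb{N}^n$ such that for every $i\in\{1,\ldots,n\}$ there is some $\mathbf{m}_i\in\operatorname{dom}\alpha\setminus\{\mathbf{1}\}$ (with $m\in\mathbb{N}$) satisfying $(\mathbf{m}_i)\alpha\in\vec{\mathbf{1}}_i$. Then $(\mathbf{x}_i)\alpha=\mathbf{x}_i$ for every $i\in\{1,\ldots,n\}$ and every $\mathbf{x}_i\in\operatorname{dom}\alpha\cap\vec{\mathbf{1}}_i$.
   Context: $\mathbb{N}=\{1,2,3,\ldots\}$ and $\mathbb{N}^n$ carries the Euclidean metric $d$. A partial isometry of $\mathbb{N}^n$ is an injective partial map $\alpha\colon\mathbb{N}^n\rightharpoonup\mathbb{N}^n$ with $d((\mathbf{x})\alpha,(\mathbf{y})\alpha)=d(\mathbf{x},\mathbf{y})$ for all $\mathbf{x},\mathbf{y}\in\operatorname{dom}\alpha$; it is cofinite if $\mathbb{N}^n\setminus\operatorname{dom}\alpha$ and $\mathbb{N}^n\setminus\operatorname{ran}\alpha$ are finite. Maps are written on the right. $\mathbf{1}=(1,\ldots,1)$; for $k\in\mathbb{N}$ and $j\in\{1,\ldots,n\}$, $\mathbf{k}_j$ is the point whose $j$-th coordinate is $k$ and all other coordinates equal $1$; $\vec{\mathbf{1}}_j=\{\mathbf{k}_j\colon k\in\mathbb{N}\}$. *)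

From HB Require Import structures.
From mathcomp Require Import all_boot all_order all_algebra.
Set Implicit Arguments. Unset Strict Implicit. Unset Printing Implicit Defensive.
Import Order.TTheory GRing.Theory Num.Theory.

(* A point with n natural coordinates (finite functions: extensional equality). *)
Definition pt (n : nat) := {ffun 'I_n -> nat}.

(* membership in N^n, with N = {1,2,3,...} *)
Definition inN (n : nat) (x : pt n) : bool := [forall i, 0 < x i].

Definition dist2 (n : nat) (x y : pt n) : int :=
  (\sum_(i < n) ((x i)%:Z - (y i)%:Z) ^+ 2)%R.

(* A partial map N^n -/-> N^n is represented as alpha : pt n -> option (pt n);
   its domain/range consist of points of N^n only. *)
Definition in_dom (n : nat) (alpha : pt n -> option (pt n)) (x : pt n) : Prop :=
  inN x /\ exists y, alpha x = Some y.
Definition in_ran (n : nat) (alpha : pt n -> option (pt n)) (y : pt n) : Prop :=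
  exists x, in_dom alpha x /\ alpha x = Some y.

Definition partial_isometry (n : nat) (alpha : pt n -> option (pt n)) : Prop :=
  (forall x y, alpha x = Some y -> inN x /\ inN y) /\
  (forall x x' y, alpha x = Some y -> alpha x' = Some y -> x = x') /\
  (* distance preserving (d(a,b) = d(c,d) iff d(a,b)^2 = d(c,d)^2, d >= 0) *)
  (forall x x' y y', alpha x = Some y -> alpha x' = Some y' ->
     dist2 y y' = dist2 x x').

Definition cofinite (n : nat) (alpha : pt n -> option (pt n)) : Prop :=
  (exists s : seq (pt n), forall x, inN x -> ~ in_dom alpha x -> x \in s) /\
  (exists s : seq (pt n), forall y, inN y -> ~ in_ran alpha y -> y \in s).

Definition one_pt (n : nat) : pt n := [ffun => 1%N].
Definition kpt (n : nat) (k : nat) (j : 'I_n) : pt n :=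
  [ffun i => if i == j then k else 1%N].
Definition on_ray (n : nat) (j : 'I_n) (x : pt n) : Prop :=
  exists k, (0 < k)%N /\ x = kpt k j.

From HB Require Import structures.
From mathcomp Require Import all_boot all_order all_algebra.
From mathcomp Require Import zify ring.
From Stdlib Require Import Classical.
Set Implicit Arguments. Unset Strict Implicit. Unset Printing Implicit Defensive.
Import Order.TTheory GRing.Theory Num.Theory.

(* Take K beyond the finite complements of dom alpha and ran alpha, so that every
   point of N^n with a coordinate >= K lies in both. The images a, e of the
   adjacent points (K,...,K) and (K,...,K) + e_j are at distance 1, hence
   e - a = s e_k with s = +-1; comparing the distances from (x)alpha to a and e
   with those from x to their preimages shows that (x)alpha_k = s x_j + c.
   Feeding in far-out points of the domain with x_j = |c| + 1 or x_j = 1, and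
   far-out points of the range with y_k = 1, positivity of coordinates forces
   s = 1 and c = 0. So alpha carries coordinate j to coordinate k, and the point
   m_j, sent into the ray 1_j, forces k = j: alpha fixes its whole domain. *)

Local Open Scope ring_scope.

Lemma seq_coord_bound (n : nat) (s : seq (pt n)) :
  exists B, forall x i, x \in s -> (x i < B)%N.
Proof.
elim: s => [|p s [B HB]]; first by exists 0%N.
exists (maxn B (\max_i p i).+1) => x i; rewrite inE => /predU1P [-> | /HB xB].
  by rewrite leq_max ltnS leq_bigmax orbT.
by rewrite leq_max xB.
Qed.

Lemma cofinite_large (n : nat) (alpha : pt n -> option (pt n)) :
  cofinite alpha -> exists K, [/\ (0 < K)%N,
    (forall x, inN x -> (exists i, K <= x i)%N -> exists y, alpha x = Some y) &
    (forall y, inN y -> (exists i, K <= y i)%N -> exists x, alpha x = Some y)].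
Proof.
move=> [[sD HD] [sR HR]].
have [BD HBD] := seq_coord_bound sD; have [BR HBR] := seq_coord_bound sR.
exists (maxn 1 (maxn BD BR)); split=> [|x Hx [i Hi]|y Hy [i Hi]]; first by rewrite leq_max.
- case Ex: (alpha x) => [y|]; first by exists y.
  have /(HD _ Hx)/(HBD _ i) : ~ in_dom alpha x by case=> _ [y]; rewrite Ex.
  by move: Hi; rewrite !geq_max => /and3P [_ Hge _]; rewrite ltnNge Hge.
- apply: NNPP => Hnot; have /(HR _ Hy)/(HBR _ i) : ~ in_ran alpha y.
    by case=> x [_ Hx]; apply: Hnot; exists x.
  by move: Hi; rewrite !geq_max => /and3P [_ _ Hge]; rewrite ltnNge Hge.
Qed.

Lemma sum_sqr_eq1 (n : nat) (f : 'I_n -> int) : \sum_i f i ^+ 2 = 1 ->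
  exists k s, s ^+ 2 = 1 /\ forall i, f i = (i == k)%:R * s.
Proof.
move=> sum_eq1.
have [k fk_neq0] : exists k, f k != 0.
  apply/existsP; apply: contraT; rewrite negb_exists => /forallP f0.
  by move: sum_eq1; rewrite big1 // => k _; have /negPn/eqP -> := f0 k.
have sqr_ge0' i : i != k -> 0 <= f i ^+ 2 by rewrite sqr_ge0.
have rest_ge0 : 0 <= \sum_(i | i != k) f i ^+ 2 := sumr_ge0 _ sqr_ge0'.
have fk2_ge1 : 1 <= f k ^+ 2 by move: fk_neq0; case: (f k) => m; lia.
move: sum_eq1 rest_ge0 fk2_ge1; rewrite (bigD1 k) //=.
set fk2 := f k ^+ 2; set rest := \sum_(i | i != k) _ => sum_eq1 rest_ge0 fk2_ge1.
have rest0 : rest = 0 by lia.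
exists k, (f k); split; first by rewrite -/fk2; lia.
move=> i; case: eqVneq => [-> | ik]; first by rewrite mul1r.
by apply/eqP; rewrite mul0r -sqrf_eq0 (psumr_eq0P sqr_ge0' rest0).
Qed.

Lemma sum_sqr_shift (n : nat) (u : 'I_n -> int) (k : 'I_n) (s : int) :
  \sum_i (u i - (i == k)%:R * s) ^+ 2 = \sum_i u i ^+ 2 - 2 * s * u k + s ^+ 2.
Proof.
rewrite (bigD1 k) //= [in RHS](bigD1 k) //= eqxx mul1r.
have -> : \sum_(i | i != k) (u i - (i == k)%:R * s) ^+ 2 = \sum_(i | i != k) u i ^+ 2.
  by apply: eq_bigr => i /negbTE ->; rewrite mul0r subr0.
ring.
Qed.

Lemma dist2_unit_step (n : nat) (x a e : pt n) (k : 'I_n) (s : int) :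
  s ^+ 2 = 1 -> (forall i, (e i)%:Z - (a i)%:Z = (i == k)%:R * s) ->
  dist2 x e = dist2 x a - 2 * s * ((x k)%:Z - (a k)%:Z) + 1.
Proof.
move=> s2 Hea; rewrite /dist2.
have -> : \sum_i ((x i)%:Z - (e i)%:Z) ^+ 2
        = \sum_i ((x i)%:Z - (a i)%:Z - (i == k)%:R * s) ^+ 2.
  by apply: eq_bigr => i _; rewrite -Hea; congr (_ ^+ 2); ring.
by rewrite sum_sqr_shift s2.
Qed.

Definition spike (n : nat) (j : 'I_n) (v w : nat) : pt n :=
  [ffun i => if i == j then v else w].

Lemma spike_inN (n : nat) (j : 'I_n) (v w : nat) :
  (0 < v)%N -> (0 < w)%N -> inN (spike j v w).
Proof. by move=> v_gt0 w_gt0; apply/forallP => i; rewrite ffunE; case: eqP. Qed.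

Lemma dist2_spike (n : nat) (j : 'I_n) (v v' w : nat) :
  dist2 (spike j v w) (spike j v' w) = (v%:Z - v'%:Z) ^+ 2.
Proof.
rewrite /dist2 (bigD1 j) //= big1 => [|i /negbTE ij]; rewrite !ffunE ?eqxx ?ij ?addr0 //.
by rewrite subrr expr0n.
Qed.

Lemma spikeS_sub (n : nat) (j i : 'I_n) (v w : nat) :
  (spike j v.+1 w i)%:Z - (spike j v w i)%:Z = (i == j)%:R * 1.
Proof. by rewrite !ffunE mulr1; case: (i == j) => /=; lia. Qed.

Lemma other_index (n : nat) : (1 < n)%N -> forall j : 'I_n, exists l, l != j.
Proof.
move=> n_gt1 j; have n_gt0 : (0 < n)%N by apply: ltn_trans n_gt1.
case: (eqVneq j (Ordinal n_gt0)) => [->|j_neq0]; last by exists (Ordinal n_gt0); rewrite eq_sym.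
by exists (Ordinal n_gt1); apply/eqP => /(congr1 val).
Qed.

Section CofiniteIsometry.

Variables (n : nat) (alpha : pt n -> option (pt n)) (K : nat).
Hypotheses (n_gt1 : (1 < n)%N) (K_gt0 : (0 < K)%N).
Hypothesis alpha_inN : forall x y, alpha x = Some y -> inN x /\ inN y.
Hypothesis alpha_dist2 : forall x x' y y',
  alpha x = Some y -> alpha x' = Some y' -> dist2 y y' = dist2 x x'.
Hypothesis dom_large :
  forall x, inN x -> (exists i, K <= x i)%N -> exists y, alpha x = Some y.
Hypothesis ran_large :
  forall y, inN y -> (exists i, K <= y i)%N -> exists x, alpha x = Some y.

Lemma spike_in_dom (j : 'I_n) (v : nat) :
  (0 < v)%N -> exists y, alpha (spike j v K) = Some y.
Proof.
move=> v_gt0; apply: dom_large; first exact: spike_inN.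
by have [l lj] := other_index n_gt1 j; exists l; rewrite ffunE (negbTE lj).
Qed.

Lemma spike_in_ran (k : 'I_n) (v : nat) :
  (0 < v)%N -> exists x, alpha x = Some (spike k v K).
Proof.
move=> v_gt0; apply: ran_large; first exact: spike_inN.
by have [l lk] := other_index n_gt1 k; exists l; rewrite ffunE (negbTE lk).
Qed.

Lemma alpha_coord_affine (j : 'I_n) : exists k (s c : int), s ^+ 2 = 1 /\
  forall x y, alpha x = Some y -> (y k)%:Z = s * (x j)%:Z + c.
Proof.
have [a Ha] := spike_in_dom j K_gt0.
have [e He] := spike_in_dom j (ltn0Sn K).
have dist2_ea : dist2 e a = 1.
  by rewrite (alpha_dist2 He Ha) dist2_spike -addn1 PoszD addrAC subrr add0r expr1n.
have [k [s [s2 Hea]]] := sum_sqr_eq1 dist2_ea.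
exists k, s, ((a k)%:Z - s * K%:Z); split=> // x y Hxy.
have step_y := dist2_unit_step y s2 Hea.
have step_x := dist2_unit_step x (expr1n _ _) (fun i => spikeS_sub j i K K).
move: step_x; rewrite ffunE eqxx -(alpha_dist2 Hxy He) -(alpha_dist2 Hxy Ha) step_y.
move=> /addIr /addrI /oppr_inj; rewrite mulr1 -mulrA => /(@mulfI int 2 isT) xj_eq.
have -> : (x j)%:Z = s * ((y k)%:Z - (a k)%:Z) + K%:Z by rewrite xj_eq subrK.
by rewrite mulrDr mulrA -expr2 s2; ring.
Qed.

Lemma alpha_coord (j : 'I_n) : exists k, forall x y, alpha x = Some y -> y k = x j.
Proof.
have [k [s [c [s2 aff]]]] := alpha_coord_affine j.
have s_eq1 : s = 1.
  move/eqP: s2; rewrite sqrf_eq1 => /orP [/eqP //|/eqP s_eqN1].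
  have [y Hy] := spike_in_dom j (ltn0Sn `|c|%N).
  by have := aff _ _ Hy; rewrite s_eqN1 ffunE eqxx; lia.
have c_ge0 : 0 <= c.
  have [y Hy] := spike_in_dom j (ltn0Sn 0).
  have /forallP/(_ k) := (alpha_inN Hy).2.
  by have := aff _ _ Hy; rewrite s_eq1 ffunE eqxx; lia.
have c_le0 : c <= 0.
  have [x Hx] := spike_in_ran k (ltn0Sn 0).
  have /forallP/(_ j) := (alpha_inN Hx).1.
  by have := aff _ _ Hx; rewrite s_eq1 ffunE eqxx; lia.
by exists k => x y Hxy; have := aff _ _ Hxy; rewrite s_eq1; lia.
Qed.

End CofiniteIsometry.

Theorem lemma2p8 (n : nat) (alpha : pt n -> option (pt n)) :
  (2 <= n)%N ->
  partial_isometry alpha ->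
  cofinite alpha ->
  (forall i : 'I_n, exists m : nat,
      (0 < m)%N /\ in_dom alpha (kpt m i) /\ kpt m i <> one_pt n /\
      exists y, alpha (kpt m i) = Some y /\ on_ray i y) ->
  forall (i : 'I_n) (x : pt n), on_ray i x -> in_dom alpha x -> alpha x = Some x.
Proof.
move=> n_gt1 [alpha_inN [_ alpha_dist2]] /cofinite_large [K [K_gt0 dom ran]] rays.
suff alpha_id : forall x y, alpha x = Some y -> y = x.
  by move=> i x _ [_ [y Hxy]]; rewrite Hxy (alpha_id _ _ Hxy).
move=> x y Hxy; apply/ffunP => j.
have [k coord_k] := alpha_coord n_gt1 K_gt0 alpha_inN alpha_dist2 dom ran j.
suff k_eq_j : k = j by rewrite -{1}k_eq_j; exact: coord_k.
have [m [_ [_ [m_neq1 [z [Hz [l [_ z_eq]]]]]]]] := rays j.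
case: (eqVneq k j) => [//|kj]; exfalso; apply: m_neq1.
have := coord_k _ _ Hz; rewrite z_eq !ffunE eqxx (negbTE kj) => m_eq1.
by apply/ffunP => i; rewrite !ffunE -m_eq1; case: (i == j).
Qed.
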